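(* Let $Q(z)$ be a $k\times k$ unimodular Hermite matrix of Laurent polynomials ($k\ge2$) whose $(1,1)$-entry $Q_{1,1}(z)$ is identically zero. Then there exist a $k\times k$ unimodular matrix $U(z)$ of Laurent polynomials and a $(k-1)\times(k-1)$ matrix $\widetilde Q(z)$ of Laurent polynomials such that $$Q(z)=U(z)\begin{bmatrix}1&\\&\widetilde Q(z)\end{bmatrix}U^\star(z).$$
   Context: For a matrix $U(z)=\sum_k U_k z^k$ of Laurent polynomials, $U^\star(z):=\sum_k\overline{U_k}^T z^{-k}$; Hermite means $A^\star=A$. A square matrix of Laurent polynomials is unimodular if its determinant is a nonzero monomial $cz^m$ ($c\ne0$, $m\in\mathbb{Z}$). *)

(* Laurent polynomials over a numeric closed field R
   (abstracting the complex numbers) are realised inside the field of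
   rational functions {fraction {poly R}}. *)
From HB Require Import structures.
From mathcomp Require Import all_boot all_order all_algebra.
Set Implicit Arguments. Unset Strict Implicit. Unset Printing Implicit Defensive.
Import Order.TTheory GRing.Theory Num.Theory.
Local Open Scope ring_scope.

Notation RF R := {fraction {poly R}}.

Definition zF (R : numClosedFieldType) : RF R := tofrac 'X.

Definition is_laurent (R : numClosedFieldType) (x : RF R) : Prop :=
  exists (p : {poly R}) (n : nat), x = tofrac p / zF R ^+ n.

Definition is_laurent_mx (R : numClosedFieldType) m n (A : 'M[RF R]_(m, n)) : Prop :=
  forall i j, is_laurent (A i j).

Definition pstar (R : numClosedFieldType) (p : {poly R}) : RF R :=
  \sum_(i < size p) tofrac ((p`_i)^*)%:P * (zF R)^-1 ^+ i.

(* star on rational functions: conjugate coefficients and substitute z -> 1/z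
   (computed on a numerator/denominator representative; restricts to the
   star of Laurent polynomials) *)
Definition fstar (R : numClosedFieldType) (x : RF R) : RF R :=
  pstar (\n_(repr x)) / pstar (\d_(repr x)).

Definition mxstar (R : numClosedFieldType) m n (A : 'M[RF R]_(m, n)) : 'M[RF R]_(n, m) :=
  \matrix_(i, j) fstar (A j i).

Definition hermite (R : numClosedFieldType) n (A : 'M[RF R]_n) : Prop :=
  mxstar A = A.

Definition unimodular (R : numClosedFieldType) n (A : 'M[RF R]_n) : Prop :=
  exists (c : R) (m : int), c != 0 /\ \det A = tofrac c%:P * zF R ^ m.

(* Write Q = [[0, r], [r^*, S]] with S^* = S.  Since det Q is a unit monomial,
   Q^-1 is again a Laurent matrix, and its lower-left block v satisfies r v = 1.
   Put a := (1 - v^* S v) / 2 and b := -(a r + v^* S); then a + a^* + v^* S v = 1,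
   so the Laurent matrix W := [[a, b], [v, 1]] has determinant a - b v = 1 and
   W^* Q W = diag(1, Qt); as W^-1 = adj W, take U := (adj W)^*. *)

From HB Require Import structures.
From mathcomp Require Import all_boot all_order all_algebra.
Set Implicit Arguments. Unset Strict Implicit. Unset Printing Implicit Defensive.
Import Order.TTheory GRing.Theory Num.Theory.
Local Open Scope ring_scope.

Lemma frac_numden (D : idomainType) (x : {fraction D}) :
  x = tofrac \n_(repr x) / tofrac \d_(repr x).
Proof.
have d0 : tofrac \d_(repr x) != 0 by rewrite tofrac_eq0 denom_ratioP.
apply: (mulIf d0); rewrite divfK // -{1}[x]reprK; unlock tofrac; rewrite !piE.
apply/eqmodP; rewrite /= FracField.equivfE /= !numden_Ratio ?mulr1 ?denom_ratioP //.
  by rewrite mulrC.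
all: exact: oner_neq0.
Qed.

Lemma fracP (D : idomainType) (x : {fraction D}) :
  exists p q, q != 0 /\ x = tofrac p / tofrac q.
Proof.
by exists \n_(repr x), \d_(repr x); split; [exact: denom_ratioP | exact: frac_numden].
Qed.

Section Star.
Variable R : numClosedFieldType.
Local Notation F := (RF R).
Local Notation z := (zF R).
Implicit Types (p q : {poly R}) (c : R) (x y : F).

Lemma zF_neq0 : z != 0.
Proof. by rewrite tofrac_eq0 polyX_eq0. Qed.

Lemma two_neq0 : (2 : F) != 0.
Proof. by rewrite -(rmorph_nat ((@tofrac _) \o polyC)) fmorph_eq0 pnatr_eq0. Qed.

Definition cstar : R -> F := (@tofrac _) \o polyC \o Num.conj_op.

Fact cstar_zV : commr_rmorph cstar z^-1.
Proof. by move=> c; apply: mulrC. Qed.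

Lemma pstarE p : pstar p = horner_morph cstar_zV p.
Proof.
rewrite /horner_morph horner_coef size_map_inj_poly; [|exact: fmorph_inj|exact: rmorph0].
by apply: eq_bigr => i _; rewrite coef_map.
Qed.

Fact pstar_is_zmod_morphism : zmod_morphism (@pstar R).
Proof. by move=> p q; rewrite !pstarE rmorphB. Qed.
Fact pstar_is_monoid_morphism : monoid_morphism (@pstar R).
Proof. by split=> [|p q]; rewrite !pstarE ?rmorph1 ?rmorphM. Qed.
HB.instance Definition _ :=
  GRing.isZmodMorphism.Build {poly R} F (@pstar R) pstar_is_zmod_morphism.
HB.instance Definition _ :=
  GRing.isMonoidMorphism.Build {poly R} F (@pstar R) pstar_is_monoid_morphism.

Lemma pstarC c : pstar c%:P = cstar c.
Proof. by rewrite pstarE horner_morphC. Qed.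
Lemma pstarX : pstar 'X = z^-1.
Proof. by rewrite pstarE horner_morphX. Qed.

(* Multiplying by [z ^+ (size p).-1] turns [pstar p] into the conjugate reversed
   polynomial, whose constant coefficient is the conjugate leading coefficient. *)
Lemma pstar_neq0 p : p != 0 -> pstar p != 0.
Proof.
move=> p0; pose N := (size p).-1; pose q := \poly_(i < size p) (p`_(N - i))^*.
have ltiN (i : 'I_(size p)) : (i <= N)%N by rewrite -ltnS prednK ?size_poly_gt0.
have zNp : z ^+ N * pstar p = tofrac q.
  rewrite /pstar /q poly_def rmorph_sum mulr_sumr (reindex_inj rev_ord_inj) /=.
  apply: eq_bigr => i _.
  have -> : (size p - i.+1 = N - i)%N by rewrite /N subnS -!subn1 subnAC.
  rewrite -mul_polyC rmorphM rmorphXn /= -{1}(subnK (ltiN i)) exprD exprVn.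
  by rewrite mulrC !mulrA mulfVK ?expf_neq0 ?zF_neq0.
apply: contra_neq (_ : q`_0 != 0) => [pp0|].
  by move: zNp; rewrite pp0 mulr0 => /esym/eqP; rewrite tofrac_eq0 => /eqP ->; rewrite coef0.
by rewrite coef_poly size_poly_gt0 p0 subn0 conjC_eq0 -lead_coefE lead_coef_eq0.
Qed.

Lemma fstar_frac p q : q != 0 -> fstar (tofrac p / tofrac q) = pstar p / pstar q.
Proof.
move=> q0; rewrite /fstar; have /eqP := frac_numden (tofrac p / tofrac q).
rewrite eqr_div ?tofrac_eq0 ?denom_ratioP // -!rmorphM tofrac_eq => /eqP pq.
by apply/eqP; rewrite eqr_div ?pstar_neq0 ?denom_ratioP // -!rmorphM pq mulrC.
Qed.

Lemma fstar_tofrac p : fstar (tofrac p) = pstar p.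
Proof. by rewrite -[tofrac p]divr1 -tofrac1 fstar_frac ?oner_neq0 // rmorph1 divr1. Qed.

Fact fstar_is_zmod_morphism : zmod_morphism (@fstar R).
Proof.
move=> x y; have [p [q [q0 ->]]] := fracP x; have [p' [q' [q'0 ->]]] := fracP y.
rewrite -mulNr -rmorphN addf_div ?tofrac_eq0 // -!rmorphM -rmorphD.
rewrite !fstar_frac ?mulf_neq0 // !rmorphD !rmorphM !rmorphN.
by rewrite -mulNr addf_div ?pstar_neq0.
Qed.

Fact fstar_is_monoid_morphism : monoid_morphism (@fstar R).
Proof.
split=> [|x y]; first by rewrite -tofrac1 fstar_tofrac rmorph1.
have [p [q [q0 ->]]] := fracP x; have [p' [q' [q'0 ->]]] := fracP y.
by rewrite mulf_div -!rmorphM !fstar_frac ?mulf_neq0 // !rmorphM mulf_div.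
Qed.

HB.instance Definition _ :=
  GRing.isZmodMorphism.Build F F (@fstar R) fstar_is_zmod_morphism.
HB.instance Definition _ :=
  GRing.isMonoidMorphism.Build F F (@fstar R) fstar_is_monoid_morphism.

Lemma fstar_z : fstar z = z^-1.
Proof. by rewrite fstar_tofrac pstarX. Qed.

Lemma fstar_cstar c : fstar (cstar c) = tofrac c%:P.
Proof. by rewrite fstar_tofrac pstarC /cstar /= conjCK. Qed.

Lemma fstar_pstar p : fstar (pstar p) = tofrac p.
Proof.
elim/poly_ind: p => [|p c IHp]; first by rewrite !rmorph0.
by rewrite !rmorphD !rmorphM /= IHp pstarX fmorphV /= fstar_z invrK pstarC fstar_cstar.
Qed.

Lemma fstarK : involutive (@fstar R).
Proof.
move=> x; have [p [q [q0 ->]]] := fracP x.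
by rewrite fstar_frac // fmorph_div /= !fstar_pstar.
Qed.

End Star.

Section Laurent.
Variable R : numClosedFieldType.
Local Notation F := (RF R).
Local Notation z := (zF R).
Local Notation laurent := (@is_laurent R).
Implicit Types (p : {poly R}) (x y : F).

Lemma laurent_tofrac p : laurent (tofrac p).
Proof. by exists p, 0%N; rewrite divr1. Qed.

Lemma laurent0 : laurent 0.
Proof. by rewrite -(rmorph0 (@tofrac _)); apply: laurent_tofrac. Qed.

Lemma laurent1 : laurent 1.
Proof. by rewrite -(rmorph1 (@tofrac _)); apply: laurent_tofrac. Qed.

Lemma laurentD x y : laurent x -> laurent y -> laurent (x + y).
Proof.
move=> [p [n ->]] [q [m ->]]; exists (p * 'X^m + q * 'X^n), (n + m)%N.
by rewrite addf_div ?expf_neq0 ?zF_neq0 // -exprD rmorphD !rmorphM !rmorphXn.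
Qed.

Lemma laurentN x : laurent x -> laurent (- x).
Proof. by move=> [p [n ->]]; exists (- p), n; rewrite rmorphN mulNr. Qed.

Lemma laurentM x y : laurent x -> laurent y -> laurent (x * y).
Proof.
move=> [p [n ->]] [q [m ->]]; exists (p * q), (n + m)%N.
by rewrite mulf_div -exprD rmorphM.
Qed.

Lemma laurentX x k : laurent x -> laurent (x ^+ k).
Proof.
by move=> lx; elim: k => [|k IHk]; [apply: laurent1 | rewrite exprS; apply: laurentM].
Qed.

Lemma laurent_sum I (r : seq I) (P : pred I) (G : I -> F) :
  (forall i, P i -> laurent (G i)) -> laurent (\sum_(i <- r | P i) G i).
Proof. by move=> lG; apply: big_ind => //; [apply: laurent0 | apply: laurentD]. Qed.

Lemma laurent_prod I (r : seq I) (P : pred I) (G : I -> F) :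
  (forall i, P i -> laurent (G i)) -> laurent (\prod_(i <- r | P i) G i).
Proof. by move=> lG; apply: big_ind => //; [apply: laurent1 | apply: laurentM]. Qed.

Lemma laurent_zV : laurent z^-1.
Proof. by exists 1, 1%N; rewrite rmorph1 div1r. Qed.

Lemma laurent_zexp (m : int) : laurent (z ^ m).
Proof.
case: m => k; first exact/laurentX/laurent_tofrac.
by rewrite NegzE -exprnN -exprVn; apply/laurentX/laurent_zV.
Qed.

Lemma laurent_pstar p : laurent (pstar p).
Proof.
elim/poly_ind: p => [|p c IHp]; first by rewrite rmorph0; apply: laurent0.
rewrite rmorphD rmorphM /= pstarX pstarC.
by apply: laurentD; [apply: laurentM IHp laurent_zV | apply: laurent_tofrac].
Qed.

Lemma laurent_fstar x : laurent x -> laurent (fstar x).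
Proof.
move=> [p [n ->]]; rewrite fmorph_div /= fstar_tofrac rmorphXn /= fstar_z exprVn invrK.
exact/laurentM/laurentX/laurent_tofrac/laurent_pstar.
Qed.

Lemma laurentV_monomial (c : R) (m : int) :
  c != 0 -> laurent ((tofrac c%:P * z ^ m)^-1).
Proof.
move=> c0; rewrite invfM invr_expz; apply: laurentM (laurent_zexp _).
by rewrite -[tofrac _]/(((@tofrac _) \o polyC) c) -fmorphV; apply: laurent_tofrac.
Qed.

End Laurent.

Section StarMatrix.
Variable R : numClosedFieldType.
Local Notation F := (RF R).
Local Notation laurent_mx := (@is_laurent_mx R _ _).
Implicit Types (m k l : nat).

Lemma mxstarE m k (A : 'M[F]_(m, k)) : mxstar A = (map_mx (@fstar R) A)^T.
Proof. by apply/matrixP => i j; rewrite !mxE. Qed.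

Lemma mxstarM m k l (A : 'M[F]_(m, k)) (B : 'M[F]_(k, l)) :
  mxstar (A *m B) = mxstar B *m mxstar A.
Proof. by rewrite !mxstarE map_mxM trmx_mul. Qed.

Lemma mxstarD m k (A B : 'M[F]_(m, k)) : mxstar (A + B) = mxstar A + mxstar B.
Proof. by apply/matrixP => i j; rewrite !mxE rmorphD. Qed.

Lemma mxstarN m k (A : 'M[F]_(m, k)) : mxstar (- A) = - mxstar A.
Proof. by apply/matrixP => i j; rewrite !mxE rmorphN. Qed.

Lemma mxstarB m k (A B : 'M[F]_(m, k)) : mxstar (A - B) = mxstar A - mxstar B.
Proof. by rewrite mxstarD mxstarN. Qed.

Lemma mxstarZ m k (x : F) (A : 'M[F]_(m, k)) : mxstar (x *: A) = fstar x *: mxstar A.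
Proof. by apply/matrixP => i j; rewrite !mxE rmorphM. Qed.

Lemma mxstar1 m : mxstar (1%:M : 'M[F]_m) = 1%:M.
Proof. by rewrite mxstarE map_mx1 trmx1. Qed.

Lemma mxstarK m k : cancel (@mxstar R m k) (@mxstar R k m).
Proof. by move=> A; apply/matrixP => i j; rewrite !mxE fstarK. Qed.

Lemma mxstar_block m1 m2 k1 k2 (A : 'M[F]_(m1, k1)) (B : 'M[F]_(m1, k2))
    (C : 'M[F]_(m2, k1)) (D : 'M[F]_(m2, k2)) :
  mxstar (block_mx A B C D) = block_mx (mxstar A) (mxstar C) (mxstar B) (mxstar D).
Proof. by rewrite !mxstarE map_block_mx tr_block_mx. Qed.

Lemma det_mxstar m (A : 'M[F]_m) : \det (mxstar A) = fstar (\det A).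
Proof. by rewrite mxstarE det_tr det_map_mx. Qed.

Lemma laurent_mxD m k (A B : 'M[F]_(m, k)) :
  laurent_mx A -> laurent_mx B -> laurent_mx (A + B).
Proof. by move=> lA lB i j; rewrite mxE; apply: laurentD. Qed.

Lemma laurent_mxN m k (A : 'M[F]_(m, k)) : laurent_mx A -> laurent_mx (- A).
Proof. by move=> lA i j; rewrite mxE; apply: laurentN. Qed.

Lemma laurent_mxB m k (A B : 'M[F]_(m, k)) :
  laurent_mx A -> laurent_mx B -> laurent_mx (A - B).
Proof. by move=> lA lB; apply/laurent_mxD/laurent_mxN. Qed.

Lemma laurent_mxM m k l (A : 'M[F]_(m, k)) (B : 'M[F]_(k, l)) :
  laurent_mx A -> laurent_mx B -> laurent_mx (A *m B).
Proof. by move=> lA lB i j; rewrite mxE; apply: laurent_sum => t _; apply: laurentM. Qed.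

Lemma laurent_mxZ m k (x : F) (A : 'M[F]_(m, k)) :
  is_laurent x -> laurent_mx A -> laurent_mx (x *: A).
Proof. by move=> lx lA i j; rewrite mxE; apply: laurentM. Qed.

Lemma laurent_mx1 m : laurent_mx (1%:M : 'M[F]_m).
Proof. by move=> i j; rewrite mxE; case: (i == j); [apply: laurent1 | apply: laurent0]. Qed.

Lemma laurent_mxstar m k (A : 'M[F]_(m, k)) : laurent_mx A -> laurent_mx (mxstar A).
Proof. by move=> lA i j; rewrite mxE; apply: laurent_fstar. Qed.

Lemma laurent_block_mx m1 m2 k1 k2 (A : 'M[F]_(m1, k1)) (B : 'M[F]_(m1, k2))
    (C : 'M[F]_(m2, k1)) (D : 'M[F]_(m2, k2)) :
  laurent_mx A -> laurent_mx B -> laurent_mx C -> laurent_mx D ->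
  laurent_mx (block_mx A B C D).
Proof.
move=> lA lB lC lD i j.
case: (split_ordP i) => i' ->; case: (split_ordP j) => j' ->.
- by rewrite block_mxEul.
- by rewrite block_mxEur.
- by rewrite block_mxEdl.
- by rewrite block_mxEdr.
Qed.

Lemma laurent_ursubmx m1 m2 k1 k2 (A : 'M[F]_(m1 + m2, k1 + k2)) :
  laurent_mx A -> laurent_mx (ursubmx A).
Proof. by move=> lA i j; rewrite !mxE. Qed.

Lemma laurent_dlsubmx m1 m2 k1 k2 (A : 'M[F]_(m1 + m2, k1 + k2)) :
  laurent_mx A -> laurent_mx (dlsubmx A).
Proof. by move=> lA i j; rewrite !mxE. Qed.

Lemma laurent_drsubmx m1 m2 k1 k2 (A : 'M[F]_(m1 + m2, k1 + k2)) :
  laurent_mx A -> laurent_mx (drsubmx A).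
Proof. by move=> lA i j; rewrite !mxE. Qed.

Lemma laurent_det m (A : 'M[F]_m) : laurent_mx A -> is_laurent (\det A).
Proof.
move=> lA; apply: laurent_sum => s _.
by apply: laurentM; [apply/laurentX/laurentN/laurent1 | apply: laurent_prod].
Qed.

Lemma laurent_adj m (A : 'M[F]_m) : laurent_mx A -> laurent_mx (\adj A).
Proof.
move=> lA i j; rewrite mxE; apply: laurentM; first exact/laurentX/laurentN/laurent1.
by apply: laurent_det => a b; rewrite !mxE.
Qed.

Lemma unimodular_unitmx k (A : 'M[F]_k) : unimodular A -> A \in unitmx.
Proof.
rewrite unitmxE unitfE => -[c [e [c0 ->]]]; rewrite mulf_neq0 ?expfz_neq0 ?zF_neq0 //.
by rewrite tofrac_eq0 polyC_eq0.
Qed.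

Lemma laurent_invmx m (A : 'M[F]_m) :
  laurent_mx A -> unimodular A -> laurent_mx (invmx A).
Proof.
move=> lA uA; rewrite /invmx unimodular_unitmx //; case: uA => c [k [c0 ->]].
by apply: laurent_mxZ (laurent_adj lA); apply: laurentV_monomial.
Qed.

End StarMatrix.

Section Reduction.
Variables (R : numClosedFieldType) (m : nat).
Local Notation F := (RF R).
Variables (r : 'M[F]_(1, m)) (S : 'M[F]_m) (v : 'M[F]_(m, 1)).
Hypotheses (S_herm : mxstar S = S) (rv1 : r *m v = 1%:M).

Let g : 'M[F]_1 := mxstar v *m S *m v.
Let a : 'M[F]_1 := 2^-1 *: (1%:M - g).
Let b : 'M[F]_(1, m) := - (a *m r + mxstar v *m S).

Definition reducer : 'M[F]_(1 + m) := block_mx a b v 1%:M.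

Lemma mxstar_reducer_corner : mxstar a = a.
Proof.
have g_herm : mxstar g = g by rewrite !mxstarM mxstarK S_herm mulmxA.
by rewrite mxstarZ fmorphV rmorph_nat mxstarB mxstar1 g_herm.
Qed.

Lemma reducer_corner_sum : a + a + g = 1%:M.
Proof.
by rewrite -scalerDl -mulr2n -[_ *+ 2]mulr_natr mulVf ?two_neq0 // scale1r subrK.
Qed.

Lemma reducer_corner_schur : a - b *m v = 1%:M.
Proof. by rewrite mulNmx opprK mulmxDl -mulmxA rv1 mulmx1 addrA reducer_corner_sum. Qed.

Lemma det_reducer : \det reducer = 1.
Proof.
have -> : reducer = block_mx (a - b *m v) b 0 1%:M *m block_mx 1%:M 0 v 1%:M.
  by rewrite mulmx_block !mulmx1 !mul1mx !mulmx0 !add0r subrK.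
by rewrite det_mulmx det_ublock det_lblock reducer_corner_schur !det1 !mulr1.
Qed.

Lemma reducer_congr :
  mxstar reducer *m block_mx 0 r (mxstar r) S *m reducer =
  block_mx 1%:M 0 0 (drsubmx (mxstar reducer *m block_mx 0 r (mxstar r) S *m reducer)).
Proof.
have vr1 : mxstar v *m mxstar r = 1%:M by rewrite -mxstarM rv1 mxstar1.
rewrite /reducer mxstar_block mxstar_reducer_corner mxstar1 !mulmx_block block_mxKdr.
rewrite !mulmx0 !mul1mx !add0r vr1 !mul1mx; congr block_mx.
- by rewrite mulmxDl -mulmxA rv1 mulmx1 addrA reducer_corner_sum.
- by rewrite mulmx1 addNr.
- rewrite mulmxDl -mulmxA rv1 mulmx1 mxstarN mxstarD !mxstarM mxstarK.
  by rewrite mxstar_reducer_corner S_herm opprD subrK addrN.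
Qed.

Lemma laurent_reducer :
  is_laurent_mx r -> is_laurent_mx S -> is_laurent_mx v -> is_laurent_mx reducer.
Proof.
move=> lr lS lv.
have lg : is_laurent_mx g by apply/laurent_mxM/lv/laurent_mxM/lS/laurent_mxstar.
have la : is_laurent_mx a.
  apply/laurent_mxZ/laurent_mxB/lg/laurent_mx1.
  by rewrite -(rmorph_nat ((@tofrac _) \o polyC)) -fmorphV; apply: laurent_tofrac.
rewrite /reducer; apply: laurent_block_mx => //; last exact: laurent_mx1.
by apply/laurent_mxN/laurent_mxD; apply: laurent_mxM => //; apply: laurent_mxstar.
Qed.

End Reduction.

Section Congruence.
Variable R : numClosedFieldType.
Local Notation F := (RF R).
Implicit Types (m k : nat).

Lemma hermite_ulsubmx0 m (Q : 'M[F]_(1 + m)) : hermite Q -> ulsubmx Q = 0 ->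
  Q = block_mx 0 (ursubmx Q) (mxstar (ursubmx Q)) (drsubmx Q) /\
  mxstar (drsubmx Q) = drsubmx Q.
Proof.
move=> hQ ul0; have QE : Q = block_mx 0 (ursubmx Q) (dlsubmx Q) (drsubmx Q).
  by rewrite -ul0 submxK.
move: hQ; rewrite /hermite [in LHS]QE mxstar_block => /esym hQ.
by case: (eq_block_mx (etrans (esym QE) hQ)) => _ _ dlE drE; rewrite {1}QE -dlE -drE.
Qed.

Lemma ulsubmx0_rinv m (Q : 'M[F]_(1 + m)) : Q \in unitmx -> ulsubmx Q = 0 ->
  ursubmx Q *m dlsubmx (invmx Q) = 1%:M.
Proof.
move=> uQ ul0; have := mulmxV uQ; set V := invmx Q.
rewrite -[Q]submxK -[V]submxK mulmx_block ul0 (scalar_mx_block 1 m).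
by rewrite block_mxKur block_mxKdl mul0mx add0r => /eq_block_mx[].
Qed.

Lemma unimodular_det1 k (A : 'M[F]_k) : \det A = 1 -> unimodular A.
Proof.
by move=> detA; exists 1, 0; rewrite oner_neq0 detA expr0z mulr1 polyC1 tofrac1.
Qed.

Lemma det_adj_det1 k (W : 'M[F]_k) : \det W = 1 -> \det (\adj W) = 1.
Proof.
move=> detW; have := congr1 determinant (mul_mx_adj W).
by rewrite det_mulmx detW mul1r det1.
Qed.

Lemma mxstar_congr_det1 k (W Q : 'M[F]_k) : \det W = 1 ->
  Q = mxstar (\adj W) *m (mxstar W *m Q *m W) *m \adj W.
Proof.
move=> detW; have WW' : W *m \adj W = 1%:M by rewrite mul_mx_adj detW.
by rewrite !mulmxA -mxstarM WW' mxstar1 mul1mx -mulmxA WW' mulmx1.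
Qed.

End Congruence.

Theorem lemma4p3 (R : numClosedFieldType) (n : nat) (Q : 'M[RF R]_(n.+2)) :
  is_laurent_mx Q -> hermite Q -> unimodular Q -> Q ord0 ord0 = 0 ->
  exists (U : 'M[RF R]_(n.+2)) (Qt : 'M[RF R]_(n.+1)),
    [/\ is_laurent_mx U, unimodular U, is_laurent_mx Qt &
        Q = U *m (block_mx (1%:M : 'M[RF R]_1) 0 0 Qt : 'M[RF R]_(n.+2)) *m mxstar U].
Proof.
move=> lQ hQ uQ Q00; pose Q' : 'M[RF R]_(1 + n.+1) := Q.
have ul0 : ulsubmx Q' = 0.
  apply/matrixP => i j; rewrite !ord1 !mxE.
  by have -> : lshift n.+1 (ord0 : 'I_1) = ord0 by apply/val_inj.
have [QE S_herm] := hermite_ulsubmx0 hQ ul0.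
have rv1 := ulsubmx0_rinv (unimodular_unitmx uQ) ul0.
have lW : is_laurent_mx (reducer (ursubmx Q') (drsubmx Q') (dlsubmx (invmx Q'))).
  apply: laurent_reducer; [exact: laurent_ursubmx | exact: laurent_drsubmx |].
  exact/laurent_dlsubmx/laurent_invmx.
set W := reducer _ _ _ in lW; have detW : \det W = 1 := det_reducer _ rv1.
exists (mxstar (\adj W)), (drsubmx (mxstar W *m Q' *m W)); split.
- exact/laurent_mxstar/laurent_adj.
- by apply: unimodular_det1; rewrite det_mxstar det_adj_det1 ?rmorph1.
- exact/laurent_drsubmx/laurent_mxM/lW/laurent_mxM/lQ/laurent_mxstar.
- have WQW : mxstar W *m Q' *m W = block_mx 1%:M 0 0 (drsubmx (mxstar W *m Q' *m W)).
    by rewrite /Q' QE; apply: reducer_congr.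
  by rewrite mxstarK -WQW; apply: mxstar_congr_det1.
Qed.
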